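(* Consider the adjustable robust counterpart problem \[ \begin{aligned} & \underset{q_{S},\pi_{T},f,x}{\text{minimize}} && x\\ & \text{such that } && \forall q_{R}\in Q,\ \exists q_{T},\pi_{S},\pi_{R},\phi\\ & \text{subject to} && c\left(q_{S},q_{T}\right)\leq x\\ & && \textstyle\sum_{j\in\partial i}\phi_{ji}+q_{i}=0 \quad \forall i\in V\\ & && \pi_{j}-\pi_{i}=-f_{ij}\left(\phi_{ij}\right) \quad \forall (i,j)\in E\\ & && \textstyle\sum_{i\in V}q_{i}=0\\ & && \underline{\pi}_{i}\leq\pi_{i}\leq\overline{\pi}_{i} \quad \forall i\in V. \end{aligned} \] There exists a function $\widetilde{q}^{T}:\mathbb{R}^{|R|+|S|+|T|}\times\mathcal{F}\rightarrow\mathbb{R}^{|T|}$ and a function $\widetilde{\pi}^{R\cup S}:\mathbb{R}^{|R|+|S|+|T|}\times\mathcal{F}\rightarrow\mathbb{R}^{|R\cup S|}$ such that this adjustable robust counterpart reads \[ \begin{aligned} & \underset{q_{S},\pi_{T},f}{\text{minimize}} && c\left(q_{S},\widetilde{q}_{T}^{T}\left(\overline{q}_{R},q_{S},\pi_{T},f\right)\right)\\ & \text{subject to} && \underline{\pi}_{i}\leq\widetilde{\pi}_{i}^{R\cup S}\left(\underline{q}_{R},q_{S},\pi_{T},f\right) \quad \forall i\in R\cup S\\ & && \widetilde{\pi}_{i}^{R\cup S}\left(\overline{q}_{R},q_{S},\pi_{T},f\right)\leq\overline{\pi}_{i} \quad \forall i\in R\cup S\\ & && \underline{\pi}_{i}\leq\pi_{i}\leq\overline{\pi}_{i}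 \quad \forall i\in T, \end{aligned} \] where $\underline{q}_{R}:=\{\underline{q}_{i}\}_{i\in R}$ and $\overline{q}_{R}:=\{\overline{q}_{i}\}_{i\in R}$ are respectively the minimum and maximum withdrawal values at the consumer nodes.
   Context: $G=(V,E)$ is a connected directed graph such that $(i,j)\in E$ iff $(j,i)\in E$; $\partial i=\{j:(j,i)\in E\}$. Productions $q:V\to\mathbb{R}$ satisfy $\sum_{i\in V}q_i=0$; flows $\phi:E\to\mathbb{R}$ are skew-symmetric, $\phi_{ij}=-\phi_{ji}$. Potentials $\pi:V\to\mathbb{R}$ satisfy $\pi_j-\pi_i=-f_{ij}(\phi_{ij})$, where the dissipation functions $f_{ij}$ are continuous, strictly monotone (so that potential decreases along the direction of the flow), satisfy $f_{ij}(x)=-f_{ji}(-x)$, and are chosen from an admissible set $\mathcal{F}$. The node set is partitioned into non-empty subsets $V=S\cup T\cup R$: sources $i\in S$ inject flow at cost $g_i(q_i)$; terminals $i\in T$ pay $h_i(q_i)$ with $h_i$ non-decreasing; internal customers $i\in R$ have uncertain production $q_i\in[\underline{q}_i,\overline{q}_i]$, and $Q=\prod_{i\in R}[\underline{q}_i,\overline{q}_i]$. The cost is $c(q_S,q_T)=\sum_{i\in S}g_i(q_i)-\sum_{i\in T}h_i(q_i)$. Non-adjustable (operational) variables: $q_S=\{q_i\}_{i\in S}$, $\pi_T=\{\pi_i\}_{i\in T}$, and $f\in\mathcal{F}$; adjustable variables: $q_T$, $\pi_S$, $\pi_R$, $\phi$. The functions $\widetilde{\pi}^{R\cup S}$ and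 $\widetilde{q}^{T}$ return, respectively, the (unique) potentials at $R\cup S$ and the productions at $T$ solving the flow network equations given $(q_R,q_S,\pi_T,f)$. *)

From HB Require Import structures.
From mathcomp Require Import all_boot all_order all_algebra.
From mathcomp Require Import all_classical all_reals all_analysis.
Set Implicit Arguments. Unset Strict Implicit. Unset Printing Implicit Defensive.
Import Order.TTheory GRing.Theory Num.Theory.
Import numFieldTopology.Exports numFieldNormedType.Exports.
Local Open Scope ring_scope.

Section NetDefs.
Variables (R : realType) (V : finType) (E : rel V).

(* A family of dissipation functions f i j : R -> R, one per ordered pair;
   only the values on edges (i,j) \in E matter. *)
Definition dissip := V -> V -> R -> R.

Definition dissipation_ok (f : dissip) : Prop :=
  forall i j, E i j ->
    [/\ continuous (f i j : R -> R),
        (forall x y : R, x < y -> f i j x < f i j y) &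
        (forall x : R, f i j x = - f j i (- x))].

Definition flow_eqs (f : dissip) (q pi : V -> R) (phi : V -> V -> R) : Prop :=
  [/\ (forall i j, E i j -> phi i j = - phi j i),
      (forall i, \sum_(j | E j i) phi j i + q i = 0) &
      (forall i j, E i j -> pi j - pi i = - f i j (phi i j))].

Definition network_sol (S T Rc : {set V}) (f : dissip) (qR qS piT : V -> R)
    (q pi : V -> R) (phi : V -> V -> R) : Prop :=
  [/\ flow_eqs f q pi phi,
      (forall i, i \in Rc -> q i = qR i),
      (forall i, i \in S -> q i = qS i) &
      (forall i, i \in T -> pi i = piT i)].

Definition cost (S T : {set V}) (g h : V -> R -> R) (qS qT : V -> R) : R :=
  \sum_(i in S) g i (qS i) - \sum_(i in T) h i (qT i).

(* Feasibility of (q_S, pi_T, f, x) in the adjustable robust counterpart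
   (for fixed f; f \in F is imposed separately). *)
Definition arc_feasible (S T Rc : {set V}) (g h : V -> R -> R)
    (qlo qhi pilo pihi : V -> R) (qS piT : V -> R) (f : dissip) (x : R) : Prop :=
  forall qR : V -> R, (forall i, i \in Rc -> qlo i <= qR i <= qhi i) ->
    exists (q pi : V -> R) (phi : V -> V -> R),
      [/\ network_sol S T Rc f qR qS piT q pi phi,
          cost S T g h qS q <= x,
          \sum_(i : V) q i = 0 &
          (forall i, pilo i <= pi i <= pihi i)].

End NetDefs.

From HB Require Import structures.
From mathcomp Require Import all_boot all_order all_algebra.
From mathcomp Require Import all_classical all_reals all_analysis.
From mathcomp Require Import lra.
Import Order.TTheory GRing.Theory Num.Theory.
Set Implicit Arguments. Unset Strict Implicit. Unset Printing Implicit Defensive.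
Local Open Scope ring_scope.

(* A discrete maximum principle drives everything.  Since each f_ij is
   strictly increasing, the flow on an edge is an increasing function of the
   potential drop along it.  Compare two solutions with the same data at S and
   T and productions q_R <= q'_R: at a node where pi - pi' is maximal and
   positive, every outgoing flow of the first solution dominates that of the
   second, while its production is not larger, so all these flows coincide and
   the maximum spreads to the neighbours; by connectedness it reaches a
   terminal, where pi = pi'.  Hence potentials are monotone in q_R, and then so
   are the terminal productions (decreasingly).  Taking q_R = q'_R gives
   uniqueness of the adjustable quantities, and for a box Q the worst cases of
   the potential bounds and of the cost (h is non-decreasing) are attained at
   the corners qlo and qhi. *)

Section FlowEquations.
Variables (R : realType) (V : finType) (E : rel V).
Hypothesis E_sym : forall i j, E i j = E j i.

Lemma production_eq_outflow (f : dissip R V) q pi phi :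
  flow_eqs E f q pi phi -> forall i, q i = \sum_(j | E j i) phi i j.
Proof.
move=> [skew conservation _] i.
have := conservation i.
rewrite (eq_bigr (fun j => - phi i j)) ?sumrN; first lra.
by move=> j Eji; rewrite skew.
Qed.

Lemma sum_productions_eq0 (f : dissip R V) q pi phi :
  flow_eqs E f q pi phi -> \sum_i q i = 0.
Proof.
move=> sol; rewrite (eq_bigr _ (fun i _ => production_eq_outflow sol i)).
set X := (X in X = 0).
have X_mkcond : X = \sum_i \sum_j (if E j i then phi i j else 0).
  by apply: eq_bigr => i _; rewrite big_mkcond.
suff : X = - X by lra.
rewrite {1}X_mkcond exchange_big /= X_mkcond -sumrN.
apply: eq_bigr => j _; rewrite -sumrN; apply: eq_bigr => i _.
case: sol => skew _ _; rewrite E_sym.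
by case Eij: (E i j); rewrite ?oppr0 // skew.
Qed.

Section TwoSolutions.
Variables (f : dissip R V) (q pi q' pi' : V -> R) (phi phi' : V -> V -> R).
Hypothesis f_ok : dissipation_ok E f.
Hypothesis sol : flow_eqs E f q pi phi.
Hypothesis sol' : flow_eqs E f q' pi' phi'.

Lemma flow_le_of_drop_le i j :
  E i j -> pi' i - pi' j <= pi i - pi j -> phi' i j <= phi i j.
Proof.
case: sol sol' => _ _ drop [_ _ drop'] Eij le_drop.
have [_ f_incr _] := f_ok Eij.
rewrite -(le_mono f_incr).
have := drop i j Eij; have := drop' i j Eij; lra.
Qed.

Lemma drop_eq_of_flow_eq i j :
  E i j -> phi i j = phi' i j -> pi' i - pi' j = pi i - pi j.
Proof.
case: sol sol' => _ _ drop [_ _ drop'] Eij eq_flow.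
have := drop i j Eij; have := drop' i j Eij; rewrite eq_flow; lra.
Qed.

Lemma outflow_ge_of_potential_gap_max i k :
  (forall j, pi j - pi' j <= pi i - pi' i) -> E k i -> phi' i k <= phi i k.
Proof.
move=> gap_max Eki; apply: flow_le_of_drop_le; first by rewrite E_sym.
have := gap_max k; lra.
Qed.

Lemma potential_gap_max_spreads i j :
  (forall k, pi k - pi' k <= pi i - pi' i) -> q i <= q' i -> E i j ->
  pi j - pi' j = pi i - pi' i.
Proof.
move=> gap_max le_q Eij.
have outflow_ge k : E k i -> 0 <= phi i k - phi' i k.
  by move=> Eki; rewrite subr_ge0 outflow_ge_of_potential_gap_max.
have outflow_eq : \sum_(k | E k i) (phi i k - phi' i k) = 0.
  apply/le_anti; rewrite sumr_ge0 // andbT sumrB.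
  by rewrite -(production_eq_outflow sol) -(production_eq_outflow sol') subr_le0.
have flow_eq : phi i j = phi' i j.
  apply/eqP; rewrite -subr_eq0; apply/eqP.
  by apply: (psumr_eq0P outflow_ge outflow_eq); rewrite E_sym.
have := drop_eq_of_flow_eq Eij flow_eq; lra.
Qed.

Hypothesis E_connected : forall i j, connect E i j.

Lemma potential_le_of_production_le t :
  pi t <= pi' t -> (forall i, pi i <= pi' i \/ q i <= q' i) ->
  forall i, pi i <= pi' i.
Proof.
move=> le_t le_pi_or_q.
pose gap i := pi i - pi' i.
have [m gap_max] : exists m, forall i, gap i <= gap m.
  by have [m _ max] := @arg_maxP _ _ _ t xpredT gap erefl; exists m => i; apply: max.
suff gap_m_le0 : gap m <= 0.
  by move=> i; have := gap_max i; move: gap_m_le0; rewrite /gap; lra.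
rewrite leNgt; apply/negP => gap_m_gt0.
have max_class_closed : fingraph.closed E [pred k | gap k == gap m].
  suff spread k l : gap k = gap m -> E k l -> gap l = gap m.
    move=> k l Ekl; rewrite !inE; apply/eqP/eqP => [/spread|/spread]; apply => //.
    by rewrite E_sym.
  move=> gap_k Ekl; rewrite -gap_k; apply: potential_gap_max_spreads => //.
  - by move=> j; rewrite -/(gap j) -/(gap k) gap_k gap_max.
  - by case: (le_pi_or_q k) => //; move: gap_k gap_m_gt0; rewrite /gap; lra.
have := closed_connect max_class_closed (E_connected m t).
rewrite !inE eqxx => /esym/eqP; move: gap_m_gt0 le_t; rewrite /gap; lra.
Qed.

End TwoSolutions.

Lemma production_le_of_potential_le (f : dissip R V) q pi phi q' pi' phi' t :
  dissipation_ok E f -> flow_eqs E f q pi phi -> flow_eqs E f q' pi' phi' ->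
  (forall i, pi i <= pi' i) -> pi t = pi' t -> q' t <= q t.
Proof.
move=> f_ok sol sol' le_pi eq_t.
rewrite (production_eq_outflow sol) (production_eq_outflow sol') -subr_ge0 -sumrB.
apply: sumr_ge0 => j Ejt; rewrite subr_ge0.
apply: (flow_le_of_drop_le f_ok sol sol'); first by rewrite E_sym.
have := le_pi j; lra.
Qed.

Hypothesis E_connected : forall i j, connect E i j.
Variables (S T Rc : {set V}).
Hypothesis partition : S :|: T :|: Rc = [set: V].

Lemma network_sol_monotone (f : dissip R V) t qR qR' qS piT q pi phi q' pi' phi' :
  t \in T -> dissipation_ok E f ->
  network_sol E S T Rc f qR qS piT q pi phi ->
  network_sol E S T Rc f qR' qS piT q' pi' phi' ->
  (forall i, i \in Rc -> qR i <= qR' i) ->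
  (forall i, pi i <= pi' i) /\ (forall i, i \in T -> q' i <= q i).
Proof.
move=> tT f_ok [sol solR solS solT] [sol' solR' solS' solT'] le_qR.
have le_pi : forall i, pi i <= pi' i.
  apply: (potential_le_of_production_le f_ok sol sol' E_connected (t := t)).
    by rewrite solT // solT'.
  move=> i; have : i \in S :|: T :|: Rc by rewrite partition inE.
  rewrite !inE => /orP [/orP [iS|iT]|iR].
  - by right; rewrite solS // solS'.
  - by left; rewrite solT // solT'.
  - by right; rewrite solR // solR' // le_qR.
split=> // i iT; apply: (production_le_of_potential_le f_ok sol sol' le_pi).
by rewrite solT // solT'.
Qed.

Section WorstCase.
Variables (g h : V -> R -> R) (qlo qhi pilo pihi : V -> R).
Variables (f : dissip R V) (qS piT : V -> R) (t : V).
Hypothesis tT : t \in T.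
Hypothesis f_ok : dissipation_ok E f.
Hypothesis solvable : forall qR, exists q pi phi,
  network_sol E S T Rc f qR qS piT q pi phi.
Hypothesis h_mono : forall i, i \in T -> forall x y : R, x <= y -> h i x <= h i y.
Hypothesis le_qbox : forall i, i \in Rc -> qlo i <= qhi i.
Variables (ql pil qh pih : V -> R) (phil phih : V -> V -> R).
Hypothesis sol_lo : network_sol E S T Rc f qlo qS piT ql pil phil.
Hypothesis sol_hi : network_sol E S T Rc f qhi qS piT qh pih phih.

Lemma arc_feasible_worst_case x :
  arc_feasible E S T Rc g h qlo qhi pilo pihi qS piT f x ->
  [/\ (forall i, i \in S :|: Rc -> pilo i <= pil i),
      (forall i, i \in S :|: Rc -> pih i <= pihi i),
      (forall i, i \in T -> pilo i <= piT i <= pihi i) &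
      cost S T g h qS qh <= x].
Proof.
move=> feasible.
have [q1 [pi1 [phi1 [sol1 _ _ bounds1]]]] := feasible qlo
  (fun i iR => introT andP (conj (lexx _) (le_qbox iR))).
have [q2 [pi2 [phi2 [sol2 cost2 _ bounds2]]]] := feasible qhi
  (fun i iR => introT andP (conj (le_qbox iR) (lexx _))).
have [le_pil _] := network_sol_monotone tT f_ok sol1 sol_lo (fun i _ => le_refl _).
have [le_pi2 le_qh] := network_sol_monotone tT f_ok sol_hi sol2 (fun i _ => le_refl _).
have [_ le_q2] := network_sol_monotone tT f_ok sol2 sol_hi (fun i _ => le_refl _).
split.
- by move=> i _; apply: le_trans (le_pil i); case/andP: (bounds1 i).
- by move=> i _; apply: le_trans (le_pi2 i) _; case/andP: (bounds2 i).
- by case: sol1 => _ _ _ solT1 i iT; rewrite -solT1.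
- apply: le_trans cost2; rewrite /cost lerD2l lerN2; apply: ler_sum => i iT.
  by have -> : q2 i = qh i by apply/le_anti; rewrite le_qh ?le_q2.
Qed.

Lemma worst_case_arc_feasible x :
  [/\ (forall i, i \in S :|: Rc -> pilo i <= pil i),
      (forall i, i \in S :|: Rc -> pih i <= pihi i),
      (forall i, i \in T -> pilo i <= piT i <= pihi i) &
      cost S T g h qS qh <= x] ->
  arc_feasible E S T Rc g h qlo qhi pilo pihi qS piT f x.
Proof.
move=> [lo_SR hi_SR bounds_T cost_hi] qR qR_in_box.
have [q [pi [phi sol]]] := solvable qR.
have [ge_pil _] := network_sol_monotone tT f_ok sol_lo sol
  (fun i iR => proj1 (andP (qR_in_box i iR))).
have [le_pih ge_qh] := network_sol_monotone tT f_ok sol sol_hi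
  (fun i iR => proj2 (andP (qR_in_box i iR))).
exists q, pi, phi; split=> //.
- apply: le_trans cost_hi; rewrite /cost lerD2l lerN2.
  by apply: ler_sum => i iT; apply: h_mono => //; apply: ge_qh.
- by case: sol => sol _ _ _; apply: sum_productions_eq0 sol.
- move=> i; have : i \in S :|: T :|: Rc by rewrite partition inE.
  have bounds_SR j : j \in S :|: Rc -> pilo j <= pi j <= pihi j.
    by move=> jSR; rewrite (le_trans (lo_SR j jSR)) ?(le_trans (le_pih j)) ?hi_SR.
  rewrite !inE => /orP [/orP [iS|iT]|iR].
  + by rewrite bounds_SR // inE iS.
  + by case: sol => _ _ _ solT; rewrite solT ?bounds_T.
  + by rewrite bounds_SR // inE iR orbT.
Qed.

End WorstCase.

End FlowEquations.

Lemma network_solution_map (R : realType) (V : finType) (E : rel V)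
    (S T Rc : {set V}) (F : dissip R V -> Prop) :
  (forall f, F f -> forall qR qS piT : V -> R, exists q pi phi,
     network_sol E S T Rc f qR qS piT q pi phi) ->
  exists sol : (V -> R) -> (V -> R) -> (V -> R) -> dissip R V -> (V -> R) * (V -> R),
    forall qR qS piT f, F f -> exists phi,
      network_sol E S T Rc f qR qS piT (sol qR qS piT f).1 (sol qR qS piT f).2 phi.
Proof.
move=> solvable.
have solutions (data : (V -> R) * (V -> R) * (V -> R) * dissip R V) :
    exists u : (V -> R) * (V -> R), F data.2 -> exists phi,
      network_sol E S T Rc data.2 data.1.1.1 data.1.1.2 data.1.2 u.1 u.2 phi.
  case: data => [[[qR qS] piT] f] /=; case: (pselect (F f)) => [Ff|nFf].
    have [q [pi [phi s]]] := solvable f Ff qR qS piT.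
    by exists (q, pi) => _; exists phi.
  by exists (fun=> 0, fun=> 0) => /nFf.
have [sol solP] := choice solutions.
exists (fun qR qS piT f => sol (qR, qS, piT, f)) => qR qS piT f.
exact: (solP (qR, qS, piT, f)).
Qed.

Theorem theorem1 (R : realType) (V : finType) (E : rel V)
  (S T Rc : {set V})
  (F : dissip R V -> Prop)
  (g h : V -> R -> R) (qlo qhi pilo pihi : V -> R) :
  (* G connected, (i,j) \in E iff (j,i) \in E *)
  (forall i j, E i j = E j i) ->
  (forall i j, connect E i j) ->
  (* V = S u T u R, a partition into non-empty parts *)
  S :|: T :|: Rc = [set: V] ->
  [disjoint S & T] -> [disjoint S & Rc] -> [disjoint T & Rc] ->
  S != finset.set0 -> T != finset.set0 -> Rc != finset.set0 ->
  (* admissible dissipation functions *)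
  (forall f, F f -> dissipation_ok E f) ->
  (* the flow network equations are solvable for every admissible f and data *)
  (forall f, F f -> forall qR qS piT : V -> R,
     exists (q pi : V -> R) (phi : V -> V -> R),
       network_sol E S T Rc f qR qS piT q pi phi) ->
  (* h_i non-decreasing for terminals *)
  (forall i, i \in T -> forall x y : R, x <= y -> h i x <= h i y) ->
  (* Q = prod_{i in R} [qlo_i, qhi_i] is a product of (non-empty) intervals *)
  (forall i, i \in Rc -> qlo i <= qhi i) ->
  exists (qT_t : (V -> R) -> (V -> R) -> (V -> R) -> dissip R V -> (V -> R))
         (piRS_t : (V -> R) -> (V -> R) -> (V -> R) -> dissip R V -> (V -> R)),
    (* they return the productions at T and potentials at R u S solving
       the network equations given (q_R, q_S, pi_T, f) *)
    (forall (qR qS piT : V -> R) (f : dissip R V), F f ->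
       exists (q pi : V -> R) (phi : V -> V -> R),
         [/\ network_sol E S T Rc f qR qS piT q pi phi,
             (forall i, i \in T -> q i = qT_t qR qS piT f i) &
             (forall i, i \in S :|: Rc -> pi i = piRS_t qR qS piT f i)]) /\
    (* the ARC (in epigraph form) coincides with the reduced problem *)
    (forall (qS piT : V -> R) (f : dissip R V) (x : R), F f ->
       (arc_feasible E S T Rc g h qlo qhi pilo pihi qS piT f x <->
        [/\ (forall i, i \in S :|: Rc -> pilo i <= piRS_t qlo qS piT f i),
            (forall i, i \in S :|: Rc -> piRS_t qhi qS piT f i <= pihi i),
            (forall i, i \in T -> pilo i <= piT i <= pihi i) &
            cost S T g h qS (qT_t qhi qS piT f) <= x])).
Proof.
move=> E_sym E_connected partition _ _ _ _ T_neq0 _ F_ok solvable h_mono le_qbox.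
have [t tT] := set0Pn _ T_neq0.
have [sol solP] := network_solution_map solvable.
exists (fun qR qS piT f => (sol qR qS piT f).1).
exists (fun qR qS piT f => (sol qR qS piT f).2).
split=> [qR qS piT f Ff|qS piT f x Ff /=].
  have [phi s] := solP qR qS piT f Ff.
  by exists (sol qR qS piT f).1, (sol qR qS piT f).2, phi.
have [phil sol_lo] := solP qlo qS piT f Ff.
have [phih sol_hi] := solP qhi qS piT f Ff.
split=> [|reduced].
- exact: (arc_feasible_worst_case E_sym E_connected partition tT (F_ok f Ff)
    le_qbox sol_lo sol_hi).
- exact: (worst_case_arc_feasible E_sym E_connected partition tT (F_ok f Ff)
    (fun qR => solvable f Ff qR qS piT) h_mono sol_lo sol_hi reduced).
Qed.
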